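(* Let $\mathbb{X},\mathbb{Y}$ be two-dimensional smooth real Banach spaces, with $\mathbb{Y}$ in addition strictly convex. Let $T\in\mathbb{L}(\mathbb{X},\mathbb{Y})$ be of rank one with $\|T\|=1$. If $(x,Tx)$ is not a CPP for some $x\in M_T$, then $T$ is an extreme contraction.
   Context: $M_T=\{x\in S_{\mathbb{X}}:\|Tx\|=\|T\|\}$. A norm one $T$ is an extreme contraction if it is an extreme point of the closed unit ball of $\mathbb{L}(\mathbb{X},\mathbb{Y})$. $B(x,r)=\{u:\|u-x\|<r\}$. $x\perp_B y$ means $\|x+\lambda y\|\ge\|x\|$ for all real $\lambda$; $x^\perp=\{y:x\perp_By\}$. For $x\in S_{\mathbb{X}}$, $y\in S_{\mathbb{Y}}$, $(x,y)$ is a CPP if there exist $r>0,\mu>0$ such that for all $z\in x^\perp\cap S_{\mathbb{X}}$, all $w\in y^\perp\cap S_{\mathbb{Y}}$ and all $a,b\in\mathbb{R}$, $ax+bz\in B(x,r)\cap S_{\mathbb{X}}$ implies $\|ay+b\mu w\|\le1$. *)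

From HB Require Import structures.
From mathcomp Require Import all_boot all_order all_algebra.
From mathcomp Require Import classical_sets reals.
Set Implicit Arguments. Unset Strict Implicit. Unset Printing Implicit Defensive.
Import Order.TTheory GRing.Theory Num.Theory.
Local Open Scope ring_scope.
Local Open Scope classical_set_scope.

(* A two-dimensional real normed space is modelled (up to linear isometry) as
   R^2 = 'rV[R]_2 equipped with an arbitrary norm N.  Finite-dimensional, hence
   automatically Banach. Operators X -> Y are 2x2 matrices acting on row
   vectors: T x := x *m T. *)
Section Defs.
Variable R : realType.
Notation V := 'rV[R]_2.

Definition is_norm (N : V -> R) : Prop :=
  [/\ forall x, 0 <= N x,
      forall x, N x = 0 -> x = 0,
      forall (a : R) x, N (a *: x) = `|a| * N x
    & forall x y, N (x + y) <= N x + N y].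

(* linear functionals on R^2, represented by a row vector f *)
Definition app (f y : V) : R := \sum_(i < 2) f 0 i * y 0 i.

Definition supporting (N : V -> R) (f x : V) : Prop :=
  app f x = 1 /\ forall y, `|app f y| <= N y.

Definition smooth (N : V -> R) : Prop :=
  forall x, N x = 1 -> forall f g, supporting N f x -> supporting N g x -> f = g.

Definition strictly_convex (N : V -> R) : Prop :=
  forall x y, N x = 1 -> N y = 1 -> x != y -> N ((2^-1 : R) *: (x + y)) < 1.

Definition opnorm (NX NY : V -> R) (T : 'M[R]_2) : R :=
  sup [set NY (x *m T) | x in [set x : V | NX x <= 1]].

Definition normAttain (NX NY : V -> R) (T : 'M[R]_2) (x : V) : Prop :=
  NX x = 1 /\ NY (x *m T) = opnorm NX NY T.

Definition birkhoff (N : V -> R) (x y : V) : Prop :=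
  forall l : R, N x <= N (x + l *: y).

Definition CPP (NX NY : V -> R) (x y : V) : Prop :=
  exists r : R, exists mu : R, 0 < r /\ 0 < mu /\
    forall (z w : V) (a b : R),
      birkhoff NX x z -> NX z = 1 ->
      birkhoff NY y w -> NY w = 1 ->
      NX (a *: x + b *: z - x) < r -> NX (a *: x + b *: z) = 1 ->
      NY (a *: y + (b * mu) *: w) <= 1.

Definition extreme_contraction (NX NY : V -> R) (T : 'M[R]_2) : Prop :=
  opnorm NX NY T <= 1 /\
  forall (S1 S2 : 'M[R]_2) (t : R),
    opnorm NX NY S1 <= 1 -> opnorm NX NY S2 <= 1 -> 0 < t < 1 ->
    T = t *: S1 + (1 - t) *: S2 -> S1 = T /\ S2 = T.
End Defs.

(* Suppose T = t S1 + (1 - t) S2 with S1, S2 in the unit ball, 0 < t < 1, and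
   write T u = f(u) y with y = T x.  Strict convexity of Y forces
   x S1 = x S2 = y.  For a unit vector z0 in the kernel of f we have
   t z0 S1 + (1 - t) z0 S2 = 0, so by convexity d = t (1 - t) z0 S1 satisfies
   ||a y +- b d|| <= 1 whenever ||a x + b z0|| = 1.  If d <> 0 this is the CPP
   inequality with mu = ||d||: by smoothness of X the unit vectors
   Birkhoff-orthogonal to x are +-z0, and for w Birkhoff-orthogonal to y the
   y-coordinate of d in the basis (y, w) vanishes, for otherwise the unit sphere
   of X would have a corner at x.  Hence d = 0, which forces S1 = T, and
   symmetrically S2 = T. *)

From mathcomp Require Import all_boot all_order all_algebra.
From mathcomp Require Import classical_sets reals.
From mathcomp Require Import ring lra.
Import Order.TTheory GRing.Theory Num.Theory.
Local Open Scope ring_scope.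
Local Open Scope classical_set_scope.
Set Implicit Arguments. Unset Strict Implicit. Unset Printing Implicit Defensive.

Section Plane.
Variable R : realType.
Local Notation V := 'rV[R]_2.

Definition vec2 (a b : R) : V := \row_(i < 2) [:: a; b]`_i.

Lemma vec2_0 a b : vec2 a b 0 0 = a. Proof. by rewrite mxE. Qed.
Lemma vec2_1 a b : vec2 a b 0 1 = b. Proof. by rewrite mxE. Qed.

Lemma row2_eq (u v : V) : u 0 0 = v 0 0 -> u 0 1 = v 0 1 -> u = v.
Proof.
move=> h0 h1; apply/rowP => -[[|[|//]] i_lt2].
  by rewrite (_ : Ordinal i_lt2 = 0) //; apply: val_inj.
by rewrite (_ : Ordinal i_lt2 = 1) //; apply: val_inj.
Qed.

Lemma appE (f u : V) : app f u = f 0 0 * u 0 0 + f 0 1 * u 0 1.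
Proof.
rewrite /app big_ord_recr big_ord_recr big_ord0 /= add0r.
by congr (f 0 _ * u 0 _ + f 0 _ * u 0 _); apply: val_inj.
Qed.

Lemma app0r (f : V) : app f 0 = 0.
Proof. by rewrite appE !mxE !mulr0 addr0. Qed.
Lemma appDr (f u v : V) : app f (u + v) = app f u + app f v.
Proof. rewrite !appE !mxE; ring. Qed.
Lemma appNr (f u : V) : app f (- u) = - app f u.
Proof. rewrite !appE !mxE; ring. Qed.
Lemma appZr (f : V) a (u : V) : app f (a *: u) = a * app f u.
Proof. rewrite !appE !mxE; ring. Qed.
Lemma appDl (f g u : V) : app (f + g) u = app f u + app g u.
Proof. rewrite !appE !mxE; ring. Qed.
Lemma appZl (f : V) a (u : V) : app (a *: f) u = a * app f u.
Proof. rewrite !appE !mxE; ring. Qed.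

Definition det2 (x z : V) := x 0 0 * z 0 1 - x 0 1 * z 0 0.

Definition dual1 (x z : V) : V := vec2 (z 0 1 / det2 x z) (- z 0 0 / det2 x z).
Definition dual2 (x z : V) : V := vec2 (- x 0 1 / det2 x z) (x 0 0 / det2 x z).

Section Basis.
Variables x z : V.
Hypothesis dxz : det2 x z != 0.

Lemma dual1_fst : app (dual1 x z) x = 1.
Proof. by rewrite appE !mxE /=; move: dxz; rewrite /det2 => d; field. Qed.
Lemma dual1_snd : app (dual1 x z) z = 0.
Proof. by rewrite appE !mxE /=; field. Qed.
Lemma dual2_fst : app (dual2 x z) x = 0.
Proof. by rewrite appE !mxE /=; field. Qed.
Lemma dual2_snd : app (dual2 x z) z = 1.
Proof. by rewrite appE !mxE /=; move: dxz; rewrite /det2 => d; field. Qed.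

Lemma dual_decomp u : u = app (dual1 x z) u *: x + app (dual2 x z) u *: z.
Proof.
move: dxz; rewrite /det2 => d.
by apply: row2_eq; rewrite !appE !mxE /= /det2; field.
Qed.

Lemma dual1_comb a b : app (dual1 x z) (a *: x + b *: z) = a.
Proof. by rewrite appDr !appZr dual1_fst dual1_snd mulr1 mulr0 addr0. Qed.
Lemma dual2_comb a b : app (dual2 x z) (a *: x + b *: z) = b.
Proof. by rewrite appDr !appZr dual2_fst dual2_snd mulr1 mulr0 add0r. Qed.

End Basis.

Lemma supporting_neq0 (N : V -> R) (f x : V) : supporting N f x -> f != 0.
Proof.
case=> fx _; apply: contra_eq_neq fx => ->.
by rewrite appE !mxE !mul0r addr0 eq_sym oner_neq0.
Qed.

Definition perp (v : V) : V := vec2 (- v 0 1) (v 0 0).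

Lemma app_perp (v : V) : app v (perp v) = 0.
Proof. by rewrite appE vec2_0 vec2_1; ring. Qed.

Lemma perp_eq0 (v : V) : (perp v == 0) = (v == 0).
Proof.
apply/eqP/eqP => [h|->]; last by apply: row2_eq; rewrite !mxE /= ?oppr0.
have h0 := congr1 (fun w : V => w 0 0) h; have h1 := congr1 (fun w : V => w 0 1) h.
rewrite /= vec2_0 mxE in h0; rewrite /= vec2_1 mxE in h1.
by apply: row2_eq; rewrite mxE ?h1 // -[LHS]opprK h0 oppr0.
Qed.

Lemma det2_perp_neq0 (v : V) : v != 0 -> det2 v (perp v) != 0.
Proof.
move=> v0; apply: contraNneq v0; rewrite /det2 vec2_0 vec2_1 => d.
have /eqP : v 0 0 ^+ 2 + v 0 1 ^+ 2 = 0 by rewrite -d; ring.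
rewrite paddr_eq0 ?sqr_ge0 // !sqrf_eq0 => /andP [/eqP v00 /eqP v01].
by apply/eqP/row2_eq; rewrite mxE.
Qed.

Lemma det2_eq0_of_kernel (f u v : V) : f != 0 -> app f u = 0 -> app f v = 0 ->
  det2 u v = 0.
Proof.
move=> f0 fu fv.
have e0 : f 0 0 * det2 u v = v 0 1 * app f u - u 0 1 * app f v.
  by rewrite !appE /det2; ring.
have e1 : f 0 1 * det2 u v = u 0 0 * app f v - v 0 0 * app f u.
  by rewrite !appE /det2; ring.
rewrite fu fv !mulr0 subrr in e0 e1.
apply/eqP; apply: contraNT f0 => d0; apply/eqP/row2_eq; rewrite mxE.
  by move/eqP: e0; rewrite mulf_eq0 (negbTE d0) orbF => /eqP.
by move/eqP: e1; rewrite mulf_eq0 (negbTE d0) orbF => /eqP.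
Qed.

Lemma det2_eq0_colinear (x z : V) : x != 0 -> det2 x z = 0 -> exists k, z = k *: x.
Proof.
rewrite /det2 => x0 d.
have [x00|x00] := eqVneq (x 0 0) 0.
  have x01 : x 0 1 != 0.
    by apply: contraTneq x0 => x01; rewrite negbK; apply/eqP/row2_eq; rewrite mxE.
  exists (z 0 1 / x 0 1); apply: row2_eq; rewrite !mxE; last by field.
  move: d; rewrite x00 mul0r sub0r mulr0 => /eqP.
  by rewrite oppr_eq0 mulf_eq0 (negbTE x01) => /eqP.
exists (z 0 0 / x 0 0); apply: row2_eq; rewrite !mxE; first by field.
apply: (mulfI x00); transitivity (x 0 1 * z 0 0); [lra | by field].
Qed.

Lemma mulmx_row2 (u : V) (S : 'M[R]_2) : u *m S = u 0 0 *: row 0 S + u 0 1 *: row 1 S.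
Proof.
apply: row2_eq; rewrite !mxE !big_ord_recr big_ord0 /= add0r;
  by congr (u 0 _ * S _ _ + u 0 _ * S _ _); apply: val_inj.
Qed.

Lemma mx2_eq_on_basis (x z : V) (A B : 'M[R]_2) : det2 x z != 0 ->
  x *m A = x *m B -> z *m A = z *m B -> A = B.
Proof.
move=> dxz hx hz; apply/row_matrixP => i; rewrite !rowE.
by rewrite (dual_decomp dxz (delta_mx 0 i)) !mulmxDl -!scalemxAl hx hz.
Qed.

Lemma rank1_factor (T : 'M[R]_2) (x : V) : \rank T = 1%N -> x *m T != 0 ->
  exists f, forall u, u *m T = app f u *: (x *m T).
Proof.
move=> rk y0; have [_] := mxrank_leqif_eq (submxMl x T).
rewrite rank_rV y0 rk eqxx => /esym /andP [_ /submxP [D hD]].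
exists D^T => u; rewrite [in LHS]hD (mulmxA u) [u *m D]mx11_scalar mul_scalar_mx.
by congr (_ *: _); rewrite mxE /app; apply: eq_bigr => i _; rewrite !mxE mulrC.
Qed.

Section Norm.
Variable N : V -> R.
Hypothesis hN : is_norm N.

Lemma nrm_ge0 u : 0 <= N u. Proof. by case: hN. Qed.
Lemma nrmZ a u : N (a *: u) = `|a| * N u. Proof. by case: hN. Qed.
Lemma ler_nrmD u v : N (u + v) <= N u + N v. Proof. by case: hN. Qed.
Lemma nrm_eq0 u : N u = 0 -> u = 0. Proof. by case: hN => _ + _ _; apply. Qed.

Lemma nrm0 : N 0 = 0.
Proof. by rewrite -(scale0r (0 : V)) nrmZ normr0 mul0r. Qed.

Lemma nrmN u : N (- u) = N u.
Proof. by rewrite -scaleN1r nrmZ normrN normr1 mul1r. Qed.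

Lemma nrm_gt0 u : u != 0 -> 0 < N u.
Proof.
move=> u0; rewrite lt_neqAle nrm_ge0 andbT eq_sym.
by apply: contra_neq u0; apply: nrm_eq0.
Qed.

Lemma nrm1_neq0 u : N u = 1 -> u != 0.
Proof.
by move=> nu; apply/eqP => u0; move: nu; rewrite u0 nrm0 => /eqP; rewrite eq_sym oner_eq0.
Qed.

Lemma nrm_normalize u : u != 0 -> N ((N u)^-1 *: u) = 1.
Proof.
move=> u0; have nu := nrm_gt0 u0.
by rewrite nrmZ ger0_norm ?invr_ge0 ?ltW // mulVf ?gt_eqF.
Qed.

(* One-dimensional Hahn-Banach: [sep] leaves room for a value [k] at [e]
   between the two envelopes. *)
Lemma norming_functional_basis (v e : V) : det2 v e != 0 ->
  exists f, app f v = N v /\ forall u, `|app f u| <= N u.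
Proof.
move=> dve.
have sep s t : - N (s *: v + e) - s * N v <= N (t *: v + e) - t * N v.
  have := ler_nrmD (t *: v + e) (- (s *: v + e)); rewrite nrmN.
  rewrite (_ : (t *: v + e) - (s *: v + e) = (t - s) *: v); last first.
    by rewrite scalerBl opprD addrACA subrr addr0.
  rewrite nrmZ; have : (t - s) * N v <= `|t - s| * N v.
    by apply: ler_wpM2r; [exact: nrm_ge0 | exact: ler_norm].
  lra.
pose A := [set - N (s *: v + e) - s * N v | s in [set: R]].
have A_ub : has_ubound A by exists (N (0 *: v + e) - 0 * N v) => _ [s _ <-].
pose k := sup A.
have k_ge s : - N (s *: v + e) - s * N v <= k by apply: ub_le_sup => //; exists s.
have k_le s : k <= N (s *: v + e) - s * N v.
  apply: ge_sup => [|_ [t _ <-]]; last exact: sep.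
  by exists (- N (0 *: v + e) - 0 * N v), 0.
exists (N v *: dual1 v e + k *: dual2 v e).
have appf u : app (N v *: dual1 v e + k *: dual2 v e) u =
    N v * app (dual1 v e) u + k * app (dual2 v e) u by rewrite appDl !appZl.
split; first by rewrite appf dual1_fst // dual2_fst // mulr1 mulr0 addr0.
move=> u; rewrite appf.
set a := app (dual1 v e) u; set b := app (dual2 v e) u.
have -> : N u = N (a *: v + b *: e) by rewrite {1}(dual_decomp dve u).
have [->|b0] := eqVneq b 0.
  by rewrite scale0r addr0 mulr0 addr0 nrmZ normrM (ger0_norm (nrm_ge0 v)) mulrC.
rewrite (_ : a *: v + b *: e = b *: ((a / b) *: v + e)); last first.
  by rewrite scalerDr scalerA mulrCA divff // mulr1.
rewrite nrmZ (_ : N v * a + k * b = b * ((a / b) * N v + k)); last by field.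
rewrite normrM ler_wpM2l // ler_norml.
by have := k_ge (a / b); have := k_le (a / b); lra.
Qed.

Lemma norming_functional (v : V) : v != 0 ->
  exists f, app f v = N v /\ forall u, `|app f u| <= N u.
Proof.
by move=> v0; apply: (@norming_functional_basis v (perp v)); apply: det2_perp_neq0.
Qed.

Lemma nrm_dominates_l1 : exists K, forall u : V, `|u 0 0| + `|u 0 1| <= K * N u.
Proof.
have e1_neq0 : vec2 1 0 != 0.
  apply: contra_neq (@oner_neq0 R) => /(congr1 (fun w : V => w 0 0)).
  by rewrite vec2_0 mxE.
have [g [ge1 g_le]] := norming_functional e1_neq0.
have g_neq0 : g != 0.
  apply: contraTneq (nrm_gt0 e1_neq0) => g0.
  by rewrite -ge1 g0 appE !mxE !mul0r addr0 ltxx.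
have pg_neq0 : perp g != 0 by rewrite perp_eq0.
have [h [hpg h_le]] := norming_functional pg_neq0.
pose D := det2 g h.
have D_gt0 : 0 < D.
  by rewrite (_ : D = N (perp g)) ?nrm_gt0 // -hpg appE /D /det2 vec2_0 vec2_1; ring.
have cramer0 (u : V) : u 0 0 * D = h 0 1 * app g u - g 0 1 * app h u.
  by rewrite !appE /D /det2; ring.
have cramer1 (u : V) : u 0 1 * D = g 0 0 * app h u - h 0 0 * app g u.
  by rewrite !appE /D /det2; ring.
have comb_le (p q u : V) a b : (forall w, `|app p w| <= N w) ->
    (forall w, `|app q w| <= N w) -> `|a * app p u - b * app q u| <= (`|a| + `|b|) * N u.
  move=> p_le q_le; rewrite mulrDl; apply: (le_trans (ler_normB _ _)); rewrite !normrM.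
  by apply: lerD; apply: ler_wpM2l.
exists ((`|h 0 1| + `|g 0 1| + `|g 0 0| + `|h 0 0|) / D) => u.
have := comb_le _ _ u (h 0 1) (g 0 1) g_le h_le; rewrite -cramer0.
have := comb_le _ _ u (g 0 0) (h 0 0) h_le g_le; rewrite -cramer1.
rewrite !normrM (gtr0_norm D_gt0) mulrAC ler_pdivlMr // => ? ?; lra.
Qed.

Lemma nrm_segment_le1 (p q : V) s : N p <= 1 -> N (p + q) <= 1 -> 0 <= s <= 1 ->
  N (p + s *: q) <= 1.
Proof.
move=> np npq /andP [s0 s1].
rewrite (_ : p + s *: q = (1 - s) *: p + s *: (p + q)); last first.
  by rewrite scalerDr addrA -scalerDl subrK scale1r.
apply: (le_trans (ler_nrmD _ _)); rewrite !nrmZ (ger0_norm s0) ger0_norm ?subr_ge0 //.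
have : (1 - s) * N p <= 1 - s by rewrite ler_piMr ?subr_ge0.
have : s * N (p + q) <= s by rewrite ler_piMr.
lra.
Qed.

Lemma birkhoff_det2 (x z : V) : birkhoff N x z -> N x = 1 -> N z = 1 -> det2 x z != 0.
Proof.
move=> bxz nx nz; apply/eqP => /(det2_eq0_colinear (nrm1_neq0 nx)) [k zk].
have k0 : k != 0 by apply: contraTneq (nrm1_neq0 nz) => k0; rewrite zk k0 scale0r eqxx.
have := bxz (- k^-1); rewrite zk scalerA mulNr mulVf // scaleN1r subrr nrm0 nx.
by rewrite ler10.
Qed.

Lemma birkhoff_dual1_supporting (x z : V) : birkhoff N x z -> N x = 1 ->
  det2 x z != 0 -> supporting N (dual1 x z) x.
Proof.
move=> bxz nx dxz; split=> [|u]; first exact: dual1_fst.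
rewrite {2}(dual_decomp dxz u).
set a := app (dual1 x z) u; set b := app (dual2 x z) u.
have [->|a0] := eqVneq a 0; first by rewrite normr0 nrm_ge0.
rewrite (_ : a *: x + b *: z = a *: (x + (b / a) *: z)); last first.
  by rewrite scalerDr scalerA mulrCA divff // mulr1.
by rewrite nrmZ -[leLHS]mulr1 ler_wpM2l // -nx; apply: bxz.
Qed.

Lemma supporting_birkhoff (f x z : V) : supporting N f x -> N x = 1 -> app f z = 0 ->
  birkhoff N x z.
Proof.
move=> [fx f_le] nx fz l; rewrite nx.
by have := f_le (x + l *: z); rewrite appDr appZr fz mulr0 addr0 fx normr1.
Qed.

Lemma unit_in_kernel (f : V) : f != 0 -> exists z, N z = 1 /\ app f z = 0.
Proof.
move=> f0; have pf0 : perp f != 0 by rewrite perp_eq0.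
exists ((N (perp f))^-1 *: perp f).
by rewrite nrm_normalize // appZr app_perp mulr0.
Qed.

Lemma strictly_convex_eq (p q : V) t : strictly_convex N ->
  N p <= 1 -> N q <= 1 -> 0 < t < 1 -> N (t *: p + (1 - t) *: q) = 1 -> p = q.
Proof.
move=> scN; wlog t_ge : p q t / 2^-1 <= t => [hwlog|] np nq /andP [t0 t1] n1.
  have [|t_lt] := lerP 2^-1 t; first by move=> /hwlog; apply => //; rewrite t0.
  apply/esym/(hwlog q p (1 - t)) => //; first lra; first by apply/andP; lra.
  by rewrite opprB addrCA subrr addr0 addrC.
have t' : 0 < 1 - t by rewrite subr_gt0.
have := ler_nrmD (t *: p) ((1 - t) *: q).
rewrite n1 !nrmZ !gtr0_norm // => hle.
have np1 : N p = 1.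
  apply/eqP; rewrite eq_le np /=.
  have : (1 - t) * N q <= 1 - t by rewrite ler_piMr // ltW.
  nra.
have nq1 : N q = 1.
  apply/eqP; rewrite eq_le nq /=.
  have : t * N p <= t by rewrite ler_piMr // ltW.
  nra.
apply/eqP; apply/negPn/negP => pq.
have := scN _ _ np1 nq1 pq; set m := _ *: (p + q) => m_lt.
have split_m : t *: p + (1 - t) *: q = (2 * t - 1) *: p + (2 - 2 * t) *: m.
  by apply: row2_eq; rewrite !mxE; field.
have := ler_nrmD ((2 * t - 1) *: p) ((2 - 2 * t) *: m).
rewrite -split_m n1 (nrmZ (2 * t - 1)) (nrmZ (2 - 2 * t)) np1 !ger0_norm; [|lra|lra].
have : (2 - 2 * t) * N m < 2 - 2 * t by rewrite gtr_pMr //; lra.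
lra.
Qed.

Section Smooth.
Hypothesis smN : smooth N.

Lemma smooth_birkhoff_kernel (f x z : V) : supporting N f x -> N x = 1 ->
  birkhoff N x z -> N z = 1 -> app f z = 0.
Proof.
move=> fsup nx bxz nz; have dxz := birkhoff_det2 bxz nx nz.
by rewrite (smN nx fsup (birkhoff_dual1_supporting bxz nx dxz)) dual1_snd.
Qed.

Lemma corner_homogeneous (x z : V) c : det2 x z != 0 ->
  (forall a b, N (a *: x + b *: z) = 1 -> a + c * `|b| <= 1) ->
  forall a b, a + c * `|b| <= N (a *: x + b *: z).
Proof.
move=> dxz corner a b.
have [u0|u0] := eqVneq (a *: x + b *: z) 0.
  have := dual1_comb dxz a b; have := dual2_comb dxz a b.
  by rewrite u0 !app0r => <- <-; rewrite normr0 mulr0 addr0 nrm0.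
have := corner (a / N (a *: x + b *: z)) (b / N (a *: x + b *: z)).
have n_gt0 := nrm_gt0 u0; set n := N _ in n_gt0 *.
rewrite ![_ / n]mulrC -!scalerA -scalerDr nrm_normalize // => /(_ erefl).
rewrite normrM [`|n^-1|]gtr0_norm ?invr_gt0 // mulrCA -mulrDr.
by rewrite mulrC ler_pdivrMr // mul1r.
Qed.

Lemma smooth_no_corner (x z : V) c : N x = 1 -> det2 x z != 0 ->
  (forall a b, N (a *: x + b *: z) = 1 -> a + c * `|b| <= 1) -> c <= 0.
Proof.
move=> nx dxz corner; rewrite leNgt; apply/negP => c_gt0.
have bound := corner_homogeneous dxz corner.
have supp s : `|s| <= c -> supporting N (dual1 x z + s *: dual2 x z) x.
  move=> sc; split=> [|u].
    by rewrite appDl appZl dual1_fst // dual2_fst // mulr0 addr0.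
  rewrite appDl appZl {3}(dual_decomp dxz u).
  set a := app (dual1 x z) u; set b := app (dual2 x z) u.
  have := bound a b; have := bound (- a) (- b).
  rewrite !scaleNr -opprD nrmN normrN.
  have : `|s * b| <= c * `|b| by rewrite normrM ler_wpM2r.
  rewrite ler_norml => /andP [? ?] ? ?.
  by rewrite ler_norml; apply/andP; split; lra.
have c_le : `|c| <= c by rewrite gtr0_norm.
have Nc_le : `|- c| <= c by rewrite normrN.
have /(congr1 (fun f => app f z)) := smN nx (supp c c_le) (supp (- c) Nc_le).
by rewrite !appDl !appZl dual1_snd // dual2_snd // !mulr1 !add0r => ?; lra.
Qed.

End Smooth.
End Norm.

Section Operators.
Variables NX NY : V -> R.
Hypotheses (hX : is_norm NX) (hY : is_norm NY).

Lemma opnorm_bounded (S : 'M[R]_2) : exists C, forall u, NY (u *m S) <= C * NX u.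
Proof.
have [K K_le] := nrm_dominates_l1 hX.
exists (K * (NY (row 0 S) + NY (row 1 S))) => u.
rewrite mulmx_row2; apply: (le_trans (ler_nrmD hY _ _)); rewrite !(nrmZ hY).
have := nrm_ge0 hY (row 0 S); have := nrm_ge0 hY (row 1 S).
have := K_le u; have := normr_ge0 (u 0 0); have := normr_ge0 (u 0 1).
nra.
Qed.

Lemma opnorm_ub (S : 'M[R]_2) u : NY (u *m S) <= opnorm NX NY S * NX u.
Proof.
have [C C_le] := opnorm_bounded S.
have ub : has_ubound [set NY (v *m S) | v in [set v : V | NX v <= 1]].
  exists `|C| => _ [v v_le <-]; apply: (le_trans (C_le v)).
  apply: (le_trans (ler_wpM2r (nrm_ge0 hX v) (ler_norm C))).
  by rewrite -[leRHS]mulr1 ler_wpM2l.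
have [->|u0] := eqVneq u 0; first by rewrite mul0mx !nrm0 // mulr0.
have := ub_le_sup ub (ex_intro2 _ _ ((NX u)^-1 *: u) _ erefl).
rewrite /= nrm_normalize // lexx -scalemxAl nrmZ // => /(_ isT).
rewrite ger0_norm ?invr_ge0 ?nrm_ge0 // mulrC -ler_pdivlMr ?invr_gt0 ?nrm_gt0 //.
by rewrite invrK.
Qed.

Section RankOne.
Variables (T : 'M[R]_2) (f x y : V).
Hypotheses (hT : forall u, u *m T = app f u *: y) (hxT : x *m T = y).
Hypotheses (nx : NX x = 1) (ny : NY y = 1).

Lemma rank1_supporting : opnorm NX NY T = 1 -> supporting NX f x.
Proof.
move=> nT; split=> [|u].
  have : (app f x - 1) *: y = 0 by rewrite scalerBl scale1r -hT hxT subrr.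
  by move/eqP; rewrite scaler_eq0 (negbTE (nrm1_neq0 hY ny)) orbF subr_eq0 => /eqP.
by have := opnorm_ub T u; rewrite hT nrmZ // ny mulr1 nT mul1r.
Qed.

Hypothesis fsup : supporting NX f x.

Lemma split_perturbation (z0 : V) (S1 S2 : 'M[R]_2) t : app f z0 = 0 ->
  opnorm NX NY S1 <= 1 -> opnorm NX NY S2 <= 1 -> 0 < t < 1 ->
  T = t *: S1 + (1 - t) *: S2 -> x *m S1 = y -> x *m S2 = y ->
  forall a b, NX (a *: x + b *: z0) = 1 ->
    NY (a *: y + b *: ((t * (1 - t)) *: (z0 *m S1))) <= 1 /\
    NY (a *: y - b *: ((t * (1 - t)) *: (z0 *m S1))) <= 1.
Proof.
move=> fz0 n1 n2 /andP [t0 t1] hTS xS1 xS2 a b nu.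
have S_le S : opnorm NX NY S <= 1 -> x *m S = y -> NY (a *: y + b *: (z0 *m S)) <= 1.
  move=> nS xS; have := opnorm_ub S (a *: x + b *: z0).
  by rewrite mulmxDl -!scalemxAl xS nu mulr1 => /le_trans; apply.
have ay_le : NY (a *: y) <= 1.
  have := (proj2 fsup) (a *: x + b *: z0).
  by rewrite appDr !appZr (proj1 fsup) fz0 nu mulr1 mulr0 addr0 nrmZ // ny mulr1.
have z0T : t *: (z0 *m S1) + (1 - t) *: (z0 *m S2) = 0.
  by rewrite !scalemxAr -mulmxDr -hTS hT fz0 scale0r.
have c2E : (t * (1 - t)) *: (z0 *m S1) = - ((1 - t) ^+ 2 *: (z0 *m S2)).
  move/eqP: z0T; rewrite addr_eq0 => /eqP c1E.
  by rewrite mulrC -scalerA c1E scalerN scalerA -expr2.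
split.
  rewrite scalerA mulrC -scalerA; apply: (nrm_segment_le1 hY ay_le (S_le _ n1 xS1)).
  by rewrite mulr_ge0 ?subr_ge0 ?ltW //=; nra.
rewrite c2E scalerN opprK scalerA mulrC -scalerA.
apply: (nrm_segment_le1 hY ay_le (S_le _ n2 xS2)).
by rewrite sqr_ge0 /= expr2; nra.
Qed.

Section Perturbation.
Variables z0 d : V.
Hypotheses (smX : smooth NX) (nz0 : NX z0 = 1) (fz0 : app f z0 = 0).
Hypothesis d_le : forall a b, NX (a *: x + b *: z0) = 1 ->
  NY (a *: y + b *: d) <= 1 /\ NY (a *: y - b *: d) <= 1.

Lemma perturbation_dual1_eq0 (w : V) : birkhoff NY y w -> NY w = 1 ->
  app (dual1 y w) d = 0.
Proof.
move=> byw nw; have dyw := birkhoff_det2 hY byw ny nw.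
have [_ ysup] := birkhoff_dual1_supporting hY byw ny dyw.
have dxz0 := birkhoff_det2 hX (supporting_birkhoff fsup nx fz0) nx nz0.
apply/normr0_eq0/eqP; rewrite eq_le normr_ge0 andbT.
apply: (smooth_no_corner hX smX nx dxz0) => a b nu; have [le1 le2] := d_le nu.
have := le_trans (ysup _) le1; have := le_trans (ysup _) le2.
rewrite !appDr appNr !appZr dual1_fst // mulr1 -normrM ![b * _]mulrC.
set c := _ * b; rewrite !ler_norml => /andP [_ ?] /andP [_ ?].
by have [c0|c0] := lerP 0 c; [rewrite ger0_norm | rewrite ltr0_norm]; lra.
Qed.

Lemma CPP_of_symmetric_perturbation : d != 0 -> CPP NX NY x y.
Proof.
(* Any radius works: the bound below holds on the whole unit sphere. *)
move=> d0; exists 1, (NY d); split; first exact: ltr01.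
split=> [|z w a b bxz nz byw nw _ nu]; first exact: nrm_gt0.
have fz := smooth_birkhoff_kernel hX smX fsup nx bxz nz.
have [k zk] : exists k, z = k *: z0.
  apply: (det2_eq0_colinear (nrm1_neq0 hX nz0)).
  exact: det2_eq0_of_kernel (supporting_neq0 fsup) fz0 fz.
have nk : `|k| = 1 by move: nz; rewrite zk nrmZ // nz0 mulr1.
have dyw := birkhoff_det2 hY byw ny nw.
have dw : d = app (dual2 y w) d *: w.
  by rewrite {1}(dual_decomp dyw d) perturbation_dual1_eq0 // scale0r add0r.
set e := app (dual2 y w) d in dw.
have nu' : NX (a *: x + (b * k) *: z0) = 1 by rewrite -scalerA -zk.
have [le1 le2] := d_le nu'.
have -> : NY d = `|k * e| by rewrite normrM nk mul1r {1}dw nrmZ // nw mulr1.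
rewrite dw !scalerA in le1 le2.
have [ke0|ke0] := lerP 0 (k * e).
  by rewrite ger0_norm // mulrA.
by rewrite ltr0_norm // mulrN mulrA scaleNr.
Qed.

End Perturbation.

Lemma split_component_eq : smooth NX -> strictly_convex NY -> ~ CPP NX NY x y ->
  forall (S1 S2 : 'M[R]_2) t, opnorm NX NY S1 <= 1 -> opnorm NX NY S2 <= 1 ->
  0 < t < 1 -> T = t *: S1 + (1 - t) *: S2 -> S1 = T.
Proof.
move=> smX scY nCPP S1 S2 t n1 n2 t01 hTS.
have xS_le S : opnorm NX NY S <= 1 -> NY (x *m S) <= 1.
  by have := opnorm_ub S x; rewrite nx mulr1 => /le_trans; apply.
have xS12 : x *m S1 = x *m S2.
  apply: (strictly_convex_eq hY scY (xS_le _ n1) (xS_le _ n2) t01).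
  by rewrite !scalemxAr -mulmxDr -hTS hxT.
have xS1 : x *m S1 = y.
  by rewrite -hxT hTS mulmxDr -!scalemxAr -xS12 -scalerDl addrC subrK scale1r.
have xS2 : x *m S2 = y by rewrite -xS12.
have [z0 [nz0 fz0]] := unit_in_kernel hX (supporting_neq0 fsup).
have dxz0 := birkhoff_det2 hX (supporting_birkhoff fsup nx fz0) nx nz0.
apply/eqP; apply/negPn/negP => S1T; apply: nCPP.
have d_le := split_perturbation fz0 n1 n2 t01 hTS xS1 xS2.
apply: (CPP_of_symmetric_perturbation smX nz0 fz0 d_le).
rewrite scaler_eq0 negb_or mulf_eq0 negb_or.
have [t0 t1] := andP t01; rewrite gt_eqF // subr_eq0 gt_eqF //=.
apply: contra S1T => /eqP z0S1; apply/eqP/(mx2_eq_on_basis dxz0); first by rewrite xS1.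
by rewrite z0S1 hT fz0 scale0r.
Qed.

End RankOne.
End Operators.
End Plane.

Theorem mainTheorem5 (R : realType) (NX NY : 'rV[R]_2 -> R) :
  is_norm NX -> is_norm NY -> smooth NX -> smooth NY -> strictly_convex NY ->
  forall T : 'M[R]_2,
    \rank T = 1%N -> opnorm NX NY T = 1 ->
    (exists x, normAttain NX NY T x /\ ~ CPP NX NY x (x *m T)) ->
    extreme_contraction NX NY T.
Proof.
move=> hX hY smX _ scY T rk nT [x [[nx nxT] nCPP]].
have ny : NY (x *m T) = 1 by rewrite nxT.
have [f hT] := rank1_factor rk (nrm1_neq0 hY ny).
have fsup := rank1_supporting hX hY hT erefl ny nT.
have split_eq := split_component_eq hX hY hT erefl nx ny fsup smX scY nCPP.
split=> [|S1 S2 t n1 n2 t01 hTS]; first by rewrite nT.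
split; first exact: split_eq n1 n2 t01 hTS.
apply: (split_eq _ _ (1 - t) n2 n1); last by rewrite subKr addrC.
by case/andP: t01 => t0 t1; apply/andP; split; lra.
Qed.
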